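(* Let $K\ge2$. For $\alpha\in\mathbb{R}$ let $s_\alpha(v)=(1-\alpha)v+\frac{\alpha}{K}$ (applied componentwise to vectors), let $q_{\mathrm{L}}:\mathbb{R}^K\to\Delta_{K-1}$ be the softmax map, let $q_{\mathrm{RL},\alpha}(g)=s_\alpha^{-1}(q_{\mathrm{L}}(g))$ for $\alpha\neq1$ (with $k$-th component $q_{\mathrm{RL},\alpha,k}(g)$), and let $D_{\mathrm{SKL},\alpha}(p\|q)=\sum_{k=1}^K s_\alpha(p_k)\ln\frac{s_\alpha(p_k)}{s_\alpha(q_k)}$ for $p,q\in s_\alpha^{-1}(\Delta_{K-1})$. Then: (B1) for $g\in\mathbb{R}^K$ and $k=1,\dots,K$, $q_{\mathrm{RL},\alpha,k}(g)$ can range over $[-\frac{\alpha}{K(1-\alpha)},\frac{K-\alpha}{K(1-\alpha)}]$ if $\alpha\in[0,1)$ and over $[\frac{K-\alpha}{K(1-\alpha)},-\frac{\alpha}{K(1-\alpha)}]$ if $\alpha\in(1,\frac{K}{K-1}]$, and each of these intervals contains $[0,1]$; (B2) $\sum_{k=1}^K q_{\mathrm{RL},\alpha,k}(g)=1$ for all $g\in\mathbb{R}^K$ and all $\alpha\neq1$; (B3) for $\alpha\in[0,1)\cup(1,\frac{K}{K-1}]$ and all $p,q\in s_\alpha^{-1}(\Delta_{K-1})$, $D_{\mathrm{SKL},\alpha}(p\|q)\ge0$, with equality if and only if $p=q$; moreover $D_{\mathrm{SKL},1}(p\|q)=0$ for all $p,q\in s_1^{-1}(\Delta_{K-1})$;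 (B4) for every $\alpha\in[0,\frac{K}{K-1}]$, $D_{\mathrm{SKL},\alpha}(p\|q)$ is jointly convex in $(p,q)$: $D_{\mathrm{SKL},\alpha}(rp_1+(1-r)p_2\|rq_1+(1-r)q_2)\le rD_{\mathrm{SKL},\alpha}(p_1\|q_1)+(1-r)D_{\mathrm{SKL},\alpha}(p_2\|q_2)$ for all $p_1,p_2,q_1,q_2\in s_\alpha^{-1}(\Delta_{K-1})$ and $r\in[0,1]$; (B5) for $\alpha\in[0,1)\cup(1,\frac{K}{K-1}]$, $\operatorname{argmin}_{g\in\mathbb{R}^K,\,g_K=0}D_{\mathrm{SKL},\alpha}((1,0,\dots,0)^\top\|q_{\mathrm{L}}(g))=(\infty,0,\dots,0)^\top$; (B6) $\operatorname{argmin}_{g\in\mathbb{R}^K,\,g_K=0}D_{\mathrm{SKL},\alpha}((1,0,\dots,0)^\top\|q_{\mathrm{RL},\alpha}(g))$ equals $(\infty,0,\dots,0)^\top$ if $\alpha=0$, equals $(\ln(\frac{K}{\alpha}+1-K),0,\dots,0)^\top$ for any $\alpha\in(0,1)\cup(1,\frac{K}{K-1})$, and equals $(-\infty,0,\dots,0)^\top$ if $\alpha=\frac{K}{K-1}$; (B7) for any $\alpha\in(1,\frac{K}{K-1}]$, $p,q\in s_\alpha^{-1}(\Delta_{K-1})$ and $g\in\mathbb{R}^K$: $D_{\mathrm{SKL},\alpha}(p\|q)=D_{\mathrm{SKL},K-(K-1)\alpha}(\frac{\mathbf{1}-p}{K-1}\|\frac{\mathbf{1}-q}{K-1})$, $D_{\mathrm{SKL},\alpha}(p\|q_{\mathrm{RL},\alpha}(g))=D_{\mathrm{SKL},K-(K-1)\alpha}(\frac{\mathbf{1}-p}{K-1}\|q_{\mathrm{RL},K-(K-1)\alpha}(g))$,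 $K-(K-1)\alpha\in[0,1)$, and $\frac{\mathbf{1}-p}{K-1}\in s_{K-(K-1)\alpha}^{-1}(\Delta_{K-1})$; (B8) if $K=2$, then for any $\alpha\in(1,2]$, $p\in s_\alpha^{-1}(\Delta_1)$ and $g\in\mathbb{R}^2$: $D_{\mathrm{SKL},\alpha}(p\|q_{\mathrm{L}}(g))=D_{\mathrm{SKL},2-\alpha}(\mathbf{1}-p\|q_{\mathrm{L}}(-g))=D_{\mathrm{SKL},2-\alpha}(p\|q_{\mathrm{L}}(g))$, $D_{\mathrm{SKL},\alpha}(p\|q_{\mathrm{RL},\alpha}(g))=D_{\mathrm{SKL},2-\alpha}(\mathbf{1}-p\|q_{\mathrm{RL},2-\alpha}(g))=D_{\mathrm{SKL},2-\alpha}(p\|q_{\mathrm{RL},2-\alpha}(-g))$, $2-\alpha\in[0,1)$, and $\mathbf{1}-p\in s_{2-\alpha}^{-1}(\Delta_1)$.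
   Context: $\Delta_{K-1}=\{p\in\mathbb{R}^K: p_k\ge0,\ \sum_k p_k=1\}$ is the probability simplex and $\mathbf{1}=(1,\dots,1)^\top\in\mathbb{R}^K$. The smoothing map is $s_\alpha(v)=(1-\alpha)v+\frac{\alpha}{K}$ for scalars, applied componentwise to vectors $v\in\mathbb{R}^K$; for $\alpha\ne1$ its inverse is $s_\alpha^{-1}(u)=(u-\frac{\alpha}{K})/(1-\alpha)$ componentwise. The set $s_\alpha^{-1}(\Delta_{K-1})$ is $\{v\in\mathbb{R}^K: s_\alpha(v)\in\Delta_{K-1}\}$ (for $\alpha\neq1$ this is the image of $\Delta_{K-1}$ under $s_\alpha^{-1}$; for $\alpha=1$ it is all of $\mathbb{R}^K$). The softmax (logit model) is $q_{\mathrm{L}}(g)=\big(e^{g_1}/\sum_l e^{g_l},\dots,e^{g_K}/\sum_l e^{g_l}\big)^\top$ and the roughened logit model is $q_{\mathrm{RL},\alpha}(g)=s_\alpha^{-1}(q_{\mathrm{L}}(g))$. The smoothed KL divergence is $D_{\mathrm{SKL},\alpha}(p\|q)=\sum_k s_\alpha(p_k)\ln\frac{s_\alpha(p_k)}{s_\alpha(q_k)}$ with the conventions $0\ln(0/c)=0$ and $c\ln(c/0)=+\infty$ for $c>0$; for $\alpha=0$ it is the KL divergence. In (B5)–(B6), minimizers are understood with coordinates in the extended real line, the maps $q_{\mathrm{L}},q_{\mathrm{RL},\alpha}$ being extended by continuity (e.g. $(\pm\infty,0,\dots,0)^\top$ denotes the limit $g_1\to\pm\infty$ with the remaining coordinates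 $0$). For $K=2$, $\mathbf{1}-p=(1-p_1,1-p_2)^\top$. *)

From HB Require Import structures.
From mathcomp Require Import all_boot all_order all_algebra.
From mathcomp Require Import all_classical all_reals all_analysis.
Set Implicit Arguments. Unset Strict Implicit. Unset Printing Implicit Defensive.
Import Order.TTheory GRing.Theory Num.Theory.
Import numFieldNormedType.Exports.
Local Open Scope classical_set_scope.
Local Open Scope ring_scope.

Section Defs.
Variables (R : realType) (K : nat).

Definition smooth (a v : R) : R := (1 - a) * v + a / K%:R.
Definition smooth_inv (a u : R) : R := (u - a / K%:R) / (1 - a).

Definition simplex (p : 'I_K -> R) : Prop :=
  (forall k, 0 <= p k) /\ \sum_(k < K) p k = 1.

Definition sinv_simplex (a : R) (v : 'I_K -> R) : Prop :=
  simplex (fun k => smooth a (v k)).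

Definition softmax (g : 'I_K -> R) : 'I_K -> R :=
  fun k => expR (g k) / \sum_(l < K) expR (g l).

Definition qRL (a : R) (g : 'I_K -> R) : 'I_K -> R :=
  fun k => smooth_inv a (softmax g k).

Definition xlogxy (x y : R) : \bar R :=
  if x == 0 then 0%E else if y == 0 then +oo%E else (x * ln (x / y))%:E.

Definition DSKL (a : R) (p q : 'I_K -> R) : \bar R :=
  (\sum_(k < K) xlogxy (smooth a (p k)) (smooth a (q k)))%E.

Definition e1 : 'I_K -> R := fun k => if val k == 0%N then 1 else 0.

Definition ray (t : R) : 'I_K -> R := fun k => if val k == 0%N then t else 0.

(* constraint g_K = 0 (last coordinate, index K-1) *)
Definition last0 (g : 'I_K -> R) : Prop := forall k : 'I_K, val k = K.-1 -> g k = 0.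

(* "argmin_{g in R^K, g_K = 0} f = (+oo,0,...,0)": the infimum of f over
   {g | g_K = 0} is not attained at any finite g, and is the limit of
   f (t,0,...,0) as t -> +oo. *)
Definition argmin_pinfty (f : ('I_K -> R) -> \bar R) : Prop :=
  exists L : \bar R,
    (fun t => f (ray t)) @ pinfty_nbhs R --> L /\
    (forall g, last0 g -> (L < f g)%E).

Definition argmin_ninfty (f : ('I_K -> R) -> \bar R) : Prop :=
  exists L : \bar R,
    (fun t => f (ray t)) @ ninfty_nbhs R --> L /\
    (forall g, last0 g -> (L < f g)%E).

Definition argmin_at (f : ('I_K -> R) -> \bar R) (g0 : 'I_K -> R) : Prop :=
  last0 g0 /\
  (forall g, last0 g -> (f g0 <= f g)%E /\ (f g = f g0 -> g = g0)).

End Defs.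

Arguments smooth {R} K a v.
Arguments smooth_inv {R} K a u.
Arguments simplex {R} K p.
Arguments sinv_simplex {R} K a v.
Arguments softmax {R} K g _.
Arguments qRL {R} K a g _.
Arguments DSKL {R} K a p q.
Arguments e1 R K _ : clear implicits.
Arguments ray {R} K t _.
Arguments last0 {R} K g.
Arguments argmin_pinfty {R} K f.
Arguments argmin_ninfty {R} K f.
Arguments argmin_at {R} K f g0.

From mathcomp Require Import all_boot all_order all_algebra.
From mathcomp Require Import all_classical all_reals all_analysis.
From mathcomp Require Import ring lra.
Set Implicit Arguments. Unset Strict Implicit. Unset Printing Implicit Defensive.
Import Order.TTheory GRing.Theory Num.Theory.
Import numFieldNormedType.Exports.
Local Open Scope classical_set_scope.
Local Open Scope ring_scope.

(* For [a != 1] the smoothing [smooth K a] is an affine bijection that sends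
   [qRL K a g] to [softmax K g], and [DSKL K a p q] is the Kullback-Leibler
   divergence of the smoothed vectors, which are probability vectors whenever
   [p] and [q] lie in [sinv_simplex K a]. Nonnegativity and the equality case
   are Gibbs' inequality, obtained by summing [x ln (x / y) >= x - y];
   joint convexity is the log-sum inequality; (B7) and (B8) follow from the
   identity [smooth K (K - (K - 1) a) ((1 - v) / (K - 1)) = smooth K a v].
   In the minimisation problems over [qRL K a g] the target [smooth K a e1] is
   compared with [softmax K g]. It is itself a value of [softmax K] exactly
   when all its coordinates are positive, i.e. for [0 < a < K / (K - 1)],
   which gives the finite minimiser. Otherwise, and in (B5) where [e1] is
   compared with [softmax K g], the divergence is positive everywhere and
   tends to [0] along the ray [(t, 0, ..., 0)] as [t] tends to [+oo], or to
   [-oo] when [a = K / (K - 1)]. *)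

Section xlogxy.
Variable R : realType.
Implicit Types x y r : R.

Lemma ln_le_subr1 (t : R) : 0 < t -> ln t <= t - 1.
Proof.
by move=> t0; rewrite -ler_expR lnK ?posrE //; have := expR_ge1Dx (t - 1); rewrite addrC subrK.
Qed.

Lemma ln_lt_subr1 (t : R) : 0 < t -> t != 1 -> ln t < t - 1.
Proof.
move=> t0 t1; rewrite -ltr_expR lnK ?posrE //.
by rewrite -subr_eq0 in t1; have := expR_gt1Dx t1; rewrite addrC subrK.
Qed.

Lemma mul_ln_div_subE x y : 0 < x -> 0 < y ->
  x * ln (x / y) - (x - y) = x * (y / x - 1 - ln (y / x)).
Proof.
move=> x0 y0; rewrite -[x / y]invf_div lnV ?posrE ?divr_gt0 //.
by rewrite !mulrDr mulrCA divff ?gt_eqF //; ring.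
Qed.

Lemma sub_le_mul_ln_div x y : 0 < x -> 0 < y -> x - y <= x * ln (x / y).
Proof.
move=> x0 y0; rewrite -subr_ge0 mul_ln_div_subE // mulr_ge0 ?(ltW x0) //.
by rewrite subr_ge0 ln_le_subr1 ?divr_gt0.
Qed.

Lemma sub_lt_mul_ln_div x y : 0 < x -> 0 < y -> x != y -> x - y < x * ln (x / y).
Proof.
move=> x0 y0 xy; rewrite -subr_gt0 mul_ln_div_subE // mulr_gt0 // subr_gt0.
rewrite ln_lt_subr1 ?divr_gt0 //; apply: contra_neq xy => yx1.
by rewrite -[y](divfK (lt0r_neq0 x0)) yx1 mul1r.
Qed.

Lemma xlogxyE x y : x = 0 \/ y != 0 -> xlogxy x y = (x * ln (x / y))%:E.
Proof.
move=> h; rewrite /xlogxy; case: eqP => [->|x0]; first by rewrite mul0r.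
by case: h => // /negPf ->.
Qed.

Lemma xlogxy0y y : xlogxy 0 y = 0%E.
Proof. by rewrite /xlogxy eqxx. Qed.

Lemma xlogxyx0 x : x != 0 -> xlogxy x 0 = +oo%E.
Proof. by rewrite /xlogxy eqxx => /negPf->. Qed.

Lemma xlogxyxx x : xlogxy x x = 0%E.
Proof. by rewrite /xlogxy; case: eqP => // /eqP x0; rewrite divff // ln1 mulr0. Qed.

Lemma xlogxy_gtNy x y : (-oo < xlogxy x y)%E.
Proof. by rewrite ltNye /xlogxy; case: ifP => //; case: ifP. Qed.

Lemma xlogxy_ge_sub x y : 0 <= x -> 0 <= y -> ((x - y)%:E <= xlogxy x y)%E.
Proof.
rewrite le_eqVlt => /predU1P[<- y0|x0]; first by rewrite xlogxy0y lee_fin; lra.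
rewrite le_eqVlt => /predU1P[<-|y0]; first by rewrite xlogxyx0 ?gt_eqF ?leey.
by rewrite xlogxyE ?gt_eqF ?lee_fin ?sub_le_mul_ln_div //; right.
Qed.

Lemma xlogxy_gt_sub x y : 0 <= x -> 0 <= y -> x != y -> ((x - y)%:E < xlogxy x y)%E.
Proof.
rewrite le_eqVlt => /predU1P[<- y0|x0]; first by rewrite xlogxy0y lte_fin; lra.
rewrite le_eqVlt => /predU1P[<-|y0] xy; first by rewrite xlogxyx0 ?gt_eqF ?ltey.
by rewrite xlogxyE ?gt_eqF ?lte_fin ?sub_lt_mul_ln_div //; right.
Qed.

Lemma xlogxyMr x y c : 0 <= x -> 0 <= y -> 0 < c ->
  xlogxy x (y * c) = (xlogxy x y - (x * ln c)%:E)%E.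
Proof.
rewrite le_eqVlt => /predU1P[<- _ _|x0]; first by rewrite !xlogxy0y mul0r sube0.
rewrite le_eqVlt => /predU1P[<- _|y0 c0]; first by rewrite mul0r !xlogxyx0 ?gt_eqF.
rewrite !xlogxyE ?mulf_neq0 ?gt_eqF //; try by right.
by rewrite -EFinB -mulrBr -ln_div ?posrE ?divr_gt0 // invfM mulrA.
Qed.

Lemma xlogxyZ r x y : 0 <= r -> xlogxy (r * x) (r * y) = (r%:E * xlogxy x y)%E.
Proof.
rewrite le_eqVlt => /predU1P[<-|r0]; first by rewrite !mul0r xlogxy0y mul0e.
have [->|x0] := eqVneq x 0; first by rewrite mulr0 !xlogxy0y mule0.
have [->|y0] := eqVneq y 0.
  by rewrite mulr0 !xlogxyx0 ?mulf_neq0 ?(gt_eqF r0) // mulry gtr0_sg ?mul1e.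
rewrite !xlogxyE; try by right; rewrite ?mulf_neq0 ?(gt_eqF r0).
by rewrite -EFinM invfM mulrACA divff ?(gt_eqF r0) // mul1r mulrA.
Qed.

(* The log-sum inequality, reduced to [x - y <= x ln (x / y)] by rescaling
   [y1, y2] by [c = (x1 + x2) / (y1 + y2)]. *)
Lemma xlogxyD_le x1 x2 y1 y2 : 0 <= x1 -> 0 <= x2 -> 0 <= y1 -> 0 <= y2 ->
  (xlogxy (x1 + x2) (y1 + y2) <= xlogxy x1 y1 + xlogxy x2 y2)%E.
Proof.
move=> x10 x20 y10 y20.
have [X0|XP] := eqVneq (x1 + x2) 0.
  have [-> ->] : x1 = 0 /\ x2 = 0 by split; lra.
  by rewrite addr0 !xlogxy0y adde0.
have [Y0|YP] := eqVneq (y1 + y2) 0.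
  have [-> ->] : y1 = 0 /\ y2 = 0 by split; lra.
  rewrite addr0 xlogxyx0 //.
  have [x1z|x1P] := eqVneq x1 0.
    by rewrite x1z add0r in XP; rewrite x1z xlogxy0y add0e xlogxyx0.
  by rewrite xlogxyx0 // addye ?leey // gt_eqF ?xlogxy_gtNy.
set c := (x1 + x2) / (y1 + y2).
have c0 : 0 < c by rewrite divr_gt0 // lt_neqAle eq_sym ?XP ?YP addr_ge0.
have -> : xlogxy (x1 + x2) (y1 + y2) = ((x1 + x2) * ln c)%:E.
  by rewrite xlogxyE //; right.
have split_c i j : 0 <= i -> 0 <= j -> xlogxy i j = (xlogxy i (j * c) + (i * ln c)%:E)%E.
  by move=> i0 j0; rewrite xlogxyMr // subeK.
rewrite (split_c x1 y1) // (split_c x2 y2) // addeACA -EFinD -mulrDl.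
rewrite -[X in (X <= _)%E]add0e leeD2r //.
have -> : 0%E = (x1 - y1 * c + (x2 - y2 * c))%:E.
  by congr EFin; rewrite /c; field.
by rewrite EFinD; apply: leeD; apply: xlogxy_ge_sub => //; rewrite mulr_ge0 // ltW.
Qed.

Lemma xlogxy_convex r x1 x2 y1 y2 : 0 <= r <= 1 ->
  0 <= x1 -> 0 <= x2 -> 0 <= y1 -> 0 <= y2 ->
  (xlogxy (r * x1 + (1 - r) * x2) (r * y1 + (1 - r) * y2)
    <= r%:E * xlogxy x1 y1 + (1 - r)%:E * xlogxy x2 y2)%E.
Proof.
move=> /andP[r0 r1] *; have r'0 : 0 <= 1 - r by rewrite subr_ge0.
by rewrite -!xlogxyZ //; apply: xlogxyD_le; rewrite mulr_ge0.
Qed.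

Section sum_xlogxy.
Variable I : finType.

Lemma sum_xlogxy_convex r (x1 x2 y1 y2 : I -> R) : 0 <= r <= 1 ->
  (forall i, 0 <= x1 i) -> (forall i, 0 <= x2 i) ->
  (forall i, 0 <= y1 i) -> (forall i, 0 <= y2 i) ->
  (\sum_i xlogxy (r * x1 i + (1 - r) * x2 i) (r * y1 i + (1 - r) * y2 i)
    <= r%:E * (\sum_i xlogxy (x1 i) (y1 i))
       + (1 - r)%:E * (\sum_i xlogxy (x2 i) (y2 i)))%E.
Proof.
move=> r01 x10 x20 y10 y20.
have sum_def (a b : I -> R) : {in xpredT &, forall i j,
    (xlogxy (a i) (b i) +? xlogxy (a j) (b j))%E}.
  by move=> i j _ _; apply: ltninfty_adde_def; rewrite inE xlogxy_gtNy.
rewrite !fin_num_sume_distrr // -big_split /=.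
by apply: lee_sum => i _; apply: xlogxy_convex.
Qed.

Lemma cvg_sum_xlogxy (T : Type) (F : set_system T) {FF : Filter F}
    (x : I -> R) (y : I -> T -> R) :
  (forall i, y i t @[t --> F] --> x i) ->
  (\sum_i xlogxy (x i) (y i t))%E @[t --> F] --> 0%E.
Proof.
move=> yx.
have defined : \forall t \near F, forall i, x i = 0 \/ y i t != 0.
  apply: filter_forall => i; have [->|xi0] := eqVneq (x i) 0.
    by apply: nearW => t; left.
  by apply: filterS (cvgr_neq0 (x i) (yx i) xi0) => t; right.
pose G t := \sum_i x i * ln (x i / y i t).
have xlogxy_near : {near F, (fun t => (G t)%:E) =1
                            (fun t => \sum_i xlogxy (x i) (y i t))%E}.
  apply: filterS defined => t xy; rewrite -sumEFin.
  by apply: eq_bigr => i _; rewrite xlogxyE.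
apply: cvg_trans (near_eq_cvg xlogxy_near) _; apply: cvg_EFin; first exact: nearW.
have -> : 0 = \sum_i x i * ln (x i / x i).
  by rewrite big1 // => i _; have [->|xi0] := eqVneq (x i) 0; rewrite ?mul0r // divff // ln1 mulr0.
apply: (@cvg_big _ _ +%R 0 xpredT add_continuous) => i _.
have [xi0|xi0] := eqVneq (x i) 0.
  by rewrite xi0; under eq_fun do rewrite mul0r; rewrite mul0r; exact: cvg_cst.
apply: cvgMl_tmp; apply: (continuous_cvg _ (continuous_ln _)); first by rewrite divff.
by apply: cvgMl_tmp; apply: cvgV => //; exact: yx.
Qed.

Variables x y : I -> R.
Hypotheses (x_ge0 : forall i, 0 <= x i) (y_ge0 : forall i, 0 <= y i).
Hypothesis sum_xy : \sum_i x i = \sum_i y i.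

Let sum_sub0 : (\sum_i (x i - y i))%:E = 0%E.
Proof. by rewrite sumrB sum_xy subrr. Qed.

Lemma sum_xlogxy_ge0 : (0 <= \sum_i xlogxy (x i) (y i))%E.
Proof.
rewrite -[X in (X <= _)%E]sum_sub0 -sumEFin; apply: lee_sum => i _; exact: xlogxy_ge_sub.
Qed.

Lemma sum_xlogxy_gt0 i0 : x i0 != y i0 -> (0 < \sum_i xlogxy (x i) (y i))%E.
Proof.
move=> xy0; rewrite -[X in (X < _)%E]sum_sub0 (bigD1 i0) //= EFinD.
rewrite [X in (_ < X)%E](bigD1 i0) //=; apply: lte_leD => //.
  exact: xlogxy_gt_sub.
by rewrite -sumEFin; apply: lee_sum => i _; exact: xlogxy_ge_sub.
Qed.

Lemma sum_xlogxy_eq0 : \sum_i xlogxy (x i) (y i) = 0%E -> x = y.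
Proof.
move=> S0; apply/funext => i; apply/eqP/negP => /negP/sum_xlogxy_gt0.
by rewrite S0 ltxx.
Qed.

End sum_xlogxy.
End xlogxy.

Section smoothing.
Variables (R : realType) (K : nat).
Implicit Types (a r u v : R) (p q : 'I_K -> R).

Lemma smoothK a : a != 1 -> cancel (smooth_inv K a) (smooth K a).
Proof.
move=> a1 u; rewrite /smooth /smooth_inv mulrC divfK ?subrK //.
by rewrite subr_eq0 eq_sym.
Qed.

Lemma smooth_invK a : a != 1 -> cancel (smooth K a) (smooth_inv K a).
Proof.
move=> a1 v; rewrite /smooth /smooth_inv addrK mulrC mulKf //.
by rewrite subr_eq0 eq_sym.
Qed.

Lemma smooth_mono a : a < 1 -> {mono smooth K a : u v / u <= v}.
Proof. by move=> a1 u v; rewrite lerD2r ler_pM2l // subr_gt0. Qed.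

Lemma smooth_nmono a : 1 < a -> {mono smooth K a : u v /~ u <= v}.
Proof. by move=> a1 u v; rewrite lerD2r ler_nM2l // subr_lt0. Qed.

Lemma cvg_smooth (T : Type) (F : set_system T) {FF : Filter F} a (f : T -> R) l :
  f s @[s --> F] --> l -> smooth K a (f s) @[s --> F] --> smooth K a l.
Proof. by move=> fl; apply: cvgD; [exact: cvgMl_tmp | exact: cvg_cst]. Qed.

Lemma smooth_affine a r u v :
  smooth K a (r * u + (1 - r) * v) = r * smooth K a u + (1 - r) * smooth K a v.
Proof. by rewrite /smooth; ring. Qed.

Lemma smooth_qRL a g k : a != 1 -> smooth K a (qRL K a g k) = softmax K g k.
Proof. by move=> a1; rewrite /qRL smoothK. Qed.

Lemma DSKL_qRL a p g : a != 1 ->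
  DSKL K a p (qRL K a g) = (\sum_k xlogxy (smooth K a (p k)) (softmax K g k))%E.
Proof. by move=> a1; apply: eq_bigr => k _; rewrite smooth_qRL. Qed.

Lemma DSKLxx a p : DSKL K a p p = 0%E.
Proof. by apply: big1 => k _; rewrite xlogxyxx. Qed.

Lemma DSKL1 p q : DSKL K 1 p q = 0%E.
Proof. by apply: big1 => k _; rewrite /smooth subrr !mul0r xlogxyxx. Qed.

Lemma DSKL_perm a (s : 'I_K -> 'I_K) p q : injective s ->
  DSKL K a (p \o s) (q \o s) = DSKL K a p q.
Proof. by move=> s_inj; rewrite /DSKL [RHS](reindex_inj s_inj). Qed.

Lemma DSKL_ge0 a p q : sinv_simplex K a p -> sinv_simplex K a q -> (0 <= DSKL K a p q)%E.
Proof. by move=> [p0 sp] [q0 sq]; apply: sum_xlogxy_ge0 => //; rewrite sp sq. Qed.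

Lemma DSKL_eq0 a p q : a != 1 -> sinv_simplex K a p -> sinv_simplex K a q ->
  DSKL K a p q = 0%E <-> p = q.
Proof.
move=> a1 [p0 sp] [q0 sq]; split => [/sum_xlogxy_eq0 spq|->]; last exact: DSKLxx.
apply/funext => k; apply: (can_inj (smooth_invK a1)).
by rewrite (congr1 (@^~ k) (spq p0 q0 _)) // sp sq.
Qed.

Lemma DSKL_convex a r p1 p2 q1 q2 : 0 <= r <= 1 ->
  sinv_simplex K a p1 -> sinv_simplex K a p2 ->
  sinv_simplex K a q1 -> sinv_simplex K a q2 ->
  (DSKL K a (fun k => (r * p1 k + (1 - r) * p2 k)%R)
            (fun k => (r * q1 k + (1 - r) * q2 k)%R)
    <= r%:E * DSKL K a p1 q1 + (1 - r)%:E * DSKL K a p2 q2)%E.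
Proof.
move=> r01 [p10 _] [p20 _] [q10 _] [q20 _]; rewrite /DSKL.
under eq_bigr do rewrite !smooth_affine.
exact: sum_xlogxy_convex.
Qed.

End smoothing.

Section two_le_K.
Variables (R : realType) (K : nat).
Hypothesis K_ge2 : (2 <= K)%N.
Implicit Types (a t v : R) (p q g : 'I_K -> R).

Let K_gt1 : 1 < K%:R :> R.
Proof. by rewrite ltr1n. Qed.

Let K_neq0 : K%:R != 0 :> R.
Proof. by rewrite gt_eqF // (lt_trans ltr01). Qed.

Let Km1_gt0 : 0 < K%:R - 1 :> R.
Proof. by rewrite subr_gt0. Qed.

Definition ord0K : 'I_K := @Ordinal K 0 (ltnW K_ge2).

Lemma sum_smooth a (v : 'I_K -> R) :
  \sum_k smooth K a (v k) = (1 - a) * \sum_k v k + a.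
Proof.
rewrite /smooth big_split /= -mulr_sumr sumr_const card_ord.
by rewrite -[a / _ *+ K]mulr_natr divfK.
Qed.

Lemma sum_smooth_eq1 a (v : 'I_K -> R) :
  a != 1 -> \sum_k smooth K a (v k) = 1 -> \sum_k v k = 1.
Proof.
move=> a1; rewrite sum_smooth => /(canRL (addrK a)) h.
by apply: (mulfI (x := 1 - a)); rewrite ?h ?mulr1 // subr_eq0 eq_sym.
Qed.

(* [smooth K a] is affine, so it maps [[0, 1]] between [smooth K a 0 = a / K]
   and [smooth K a 1 = 1 - a (K - 1) / K]. *)
Lemma smooth_itv a v : 0 <= a <= K%:R / (K%:R - 1) -> 0 <= v <= 1 ->
  0 <= smooth K a v <= 1.
Proof.
move=> /andP[a0 aK] /andP[v0 v1].
have aK' : a * (K%:R - 1) <= K%:R by rewrite -ler_pdivlMr.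
have K_gt0 : 0 < K%:R :> R by rewrite (lt_trans ltr01).
have K2 : 2 <= K%:R :> R by rewrite ler_nat.
have w := divfK K_neq0 a; set w' := a / K%:R in w *.
have w0 : 0 <= w' by rewrite divr_ge0.
have w1 : w' <= 1 by rewrite -(ler_pM2r K_gt0) w mul1r; nra.
have s0 : 0 <= 1 - a + w' by rewrite -(pmulr_lge0 _ K_gt0) mulrDl w; nra.
have s1 : 1 - a + w' <= 1 by rewrite -(ler_pM2r K_gt0) mulrDl w mul1r; nra.
have -> : smooth K a v = (1 - v) * w' + v * (1 - a + w') by rewrite /smooth -/w'; ring.
apply/andP; split; nra.
Qed.

Lemma smooth_endpoints a : 0 <= a <= K%:R / (K%:R - 1) ->
  0 <= smooth K a 0 <= 1 /\ 0 <= smooth K a 1 <= 1.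
Proof. by move=> a_itv; split; apply: smooth_itv; rewrite ?lexx ?ler01. Qed.

Lemma smoothing_range a : 0 <= a < 1 \/ 1 < a <= K%:R / (K%:R - 1) ->
  a != 1 /\ 0 <= a <= K%:R / (K%:R - 1).
Proof.
have K1 : 1 <= K%:R / (K%:R - 1) :> R by rewrite ler_pdivlMr // mul1r gerBl.
case=> /andP[a0 a1].
  by rewrite lt_eqF //; split => //; apply/andP; split; lra.
by rewrite gt_eqF //; split => //; apply/andP; split; lra.
Qed.

Lemma sinv_simplex_simplex a p : 0 <= a <= K%:R / (K%:R - 1) ->
  simplex K p -> sinv_simplex K a p.
Proof.
move=> a_itv [p0 sp]; split; last by rewrite sum_smooth sp mulr1 subrK.
move=> k; suff /andP[] : 0 <= smooth K a (p k) <= 1 by [].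
apply: smooth_itv => //.
by rewrite p0 /= -sp (bigD1 k) //= lerDl sumr_ge0.
Qed.

Lemma sum_expR_gt0 g : 0 < \sum_l expR (g l).
Proof.
rewrite (bigD1 ord0K) //= ltr_pwDl ?expR_gt0 //.
by apply: sumr_ge0 => l _; exact: expR_ge0.
Qed.

Lemma softmax_gt0 g k : 0 < softmax K g k.
Proof. by rewrite divr_gt0 ?expR_gt0 ?sum_expR_gt0. Qed.

Lemma sum_softmax g : \sum_k softmax K g k = 1.
Proof. by rewrite -mulr_suml divff // gt_eqF ?sum_expR_gt0. Qed.

Lemma exists_ord_neq (k : 'I_K) : exists j : 'I_K, j != k.
Proof.
exists (if val k == 0%N then Ordinal K_ge2 else ord0K).
case: (val k =P 0%N) => k0; apply/eqP => /(congr1 val) /= jk; first by rewrite k0 in jk.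
exact: k0 (esym jk).
Qed.

Lemma softmax_lt1 g k : softmax K g k < 1.
Proof.
have [j jk] := exists_ord_neq k.
rewrite -(sum_softmax g) (bigD1 k) //= ltrDl (bigD1 j) //= ltr_pwDl ?softmax_gt0 //.
by apply: sumr_ge0 => i _; exact: ltW (softmax_gt0 _ _).
Qed.

Lemma simplex_softmax g : simplex K (softmax K g).
Proof. by split; [move=> k; exact: ltW (softmax_gt0 g k) | exact: sum_softmax]. Qed.

Lemma softmax_inj g g' l : g l = g' l -> softmax K g = softmax K g' -> g = g'.
Proof.
move=> gl sg; have S_eq : \sum_l expR (g l) = \sum_l expR (g' l).
  apply: invr_inj; apply: (mulfI (lt0r_neq0 (expR_gt0 (g l)))).
  by rewrite {2}gl; exact: (congr1 (@^~ l) sg).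
apply/funext => k; apply: expR_inj.
apply: (mulIf (invr_neq0 (lt0r_neq0 (sum_expR_gt0 g)))).
by rewrite {2}S_eq; exact: (congr1 (@^~ k) sg).
Qed.

Lemma sum_qRL a g : a != 1 -> \sum_k qRL K a g k = 1.
Proof.
move=> a1; apply: (sum_smooth_eq1 a1).
by under eq_bigr => k _ do rewrite smooth_qRL //; exact: sum_softmax.
Qed.

Definition spike (k : 'I_K) t : 'I_K -> R := fun l => if l == k then t else 0.

Definition peak_weight t : R := expR t / (expR t + (K%:R - 1)).

Lemma ray_spike t : ray K t = spike ord0K t.
Proof. by apply/funext => l; rewrite /ray /spike -(inj_eq val_inj). Qed.

Lemma e1_spike : e1 R K = spike ord0K 1.
Proof. by apply/funext => l; rewrite /e1 /spike -(inj_eq val_inj). Qed.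

Lemma simplex_e1 : simplex K (e1 R K).
Proof.
rewrite e1_spike /spike; split=> [k|]; first by case: eqP.
by rewrite (bigD1 ord0K) //= ?eqxx big1 ?addr0 // => k /negPf->.
Qed.

Lemma softmax_spike k t l : softmax K (spike k t) l =
  if l == k then peak_weight t else (1 - peak_weight t) / (K%:R - 1).
Proof.
have sum_spike : \sum_j expR (spike k t j) = expR t + (K%:R - 1).
  rewrite (bigD1 k) //= /spike eqxx; congr (_ + _).
  rewrite (eq_bigr (fun _ => 1)) => [|j /negPf->]; last by rewrite expR0.
  by rewrite sumr_const cardC1 card_ord -[in RHS](prednK (ltnW K_ge2)) -natr1 addrK.
have ep := expR_gt0 t.
rewrite /softmax /peak_weight sum_spike /spike; case: eqP => // _.
by rewrite expR0; field; rewrite !gt_eqF // addr_gt0.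
Qed.

Lemma peak_weight_ln c : 0 < c -> peak_weight (ln c) = c / (c + (K%:R - 1)).
Proof. by move=> c0; rewrite /peak_weight lnK. Qed.

Lemma softmax_surj k m : 0 < m < 1 -> exists g, softmax K g k = m.
Proof.
move=> /andP[m0 m1]; have m1' : 0 < 1 - m by rewrite subr_gt0.
exists (spike k (ln (m * (K%:R - 1) / (1 - m)))).
rewrite softmax_spike eqxx peak_weight_ln ?divr_gt0 ?mulr_gt0 //; field.
have -> : m * (K%:R - 1) + (K%:R - 1) * (1 - m) = K%:R - 1 by ring.
by rewrite !gt_eqF.
Qed.

Lemma qRL_surj a k y : a != 1 -> 0 < smooth K a y < 1 -> exists g, qRL K a g k = y.
Proof. by move=> a1 /(softmax_surj k)[g sg]; exists g; rewrite /qRL sg smooth_invK. Qed.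

Lemma smooth_inv0E a : smooth_inv K a 0 = - a / (K%:R * (1 - a)).
Proof. by rewrite /smooth_inv invfM; ring. Qed.

Lemma smooth_inv1E a : smooth_inv K a 1 = (K%:R - a) / (K%:R * (1 - a)).
Proof. by rewrite /smooth_inv invfM mulrA; congr (_ * _); field. Qed.

Lemma qRL_range a :
  let lo := - a / (K%:R * (1 - a)) in
  let hi := (K%:R - a) / (K%:R * (1 - a)) in
  (0 <= a < 1 ->
     (forall g k, lo <= qRL K a g k <= hi) /\
     (forall k y, lo < y < hi -> exists g, qRL K a g k = y) /\
     lo <= 0 /\ 1 <= hi) /\
  (1 < a <= K%:R / (K%:R - 1) ->
     (forall g k, hi <= qRL K a g k <= lo) /\
     (forall k y, hi < y < lo -> exists g, qRL K a g k = y) /\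
     hi <= 0 /\ 1 <= lo).
Proof.
rewrite /= -smooth_inv0E -smooth_inv1E.
set lo := smooth_inv K a 0; set hi := smooth_inv K a 1.
have softmax_itv g k : 0 <= softmax K g k <= 1.
  by rewrite (ltW (softmax_gt0 g k)) (ltW (softmax_lt1 g k)).
split=> a_itv.
  have [a1 /smooth_endpoints[/andP[s00 _] /andP[_ s11]]] := smoothing_range (or_introl a_itv).
  have mono := smooth_mono K (proj2 (andP a_itv)); have lt_mono := leW_mono mono.
  have [slo shi] : smooth K a lo = 0 /\ smooth K a hi = 1 by rewrite !smoothK.
  split=> [g k|]; first by rewrite -[lo <= _]mono -[_ <= hi]mono slo shi smooth_qRL // softmax_itv.
  split=> [k y|]; first by rewrite -[lo < _]lt_mono -[_ < hi]lt_mono slo shi; exact: qRL_surj.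
  by rewrite -[lo <= _]mono -[_ <= hi]mono slo shi s00 s11.
have [a1 /smooth_endpoints[/andP[_ s01] /andP[s10 _]]] := smoothing_range (or_intror a_itv).
have nmono := smooth_nmono K (proj1 (andP a_itv)); have lt_nmono := leW_nmono nmono.
have [slo shi] : smooth K a lo = 0 /\ smooth K a hi = 1 by rewrite !smoothK.
split=> [g k|].
  by rewrite -[hi <= _]nmono -[_ <= lo]nmono slo shi smooth_qRL // andbC softmax_itv.
split=> [k y|]; first by rewrite -[hi < _]lt_nmono -[_ < lo]lt_nmono slo shi andbC; exact: qRL_surj.
by rewrite -[hi <= _]nmono -[_ <= lo]nmono slo shi s01 s10.
Qed.

Section peak_weight_limits.
Context (T : Type) (F : set_system T) {FF : Filter F} (u : T -> R).

Lemma cvg_peak_weight1 :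
  expR (- u s) @[s --> F] --> (0 : R) -> peak_weight (u s) @[s --> F] --> (1 : R).
Proof.
move=> e0; have -> : (fun s => peak_weight (u s)) = fun s => (1 + (K%:R - 1) * expR (- u s))^-1.
  apply/funext => s; rewrite /peak_weight expRN; have ep := expR_gt0 (u s).
  by field; rewrite !gt_eqF // addr_gt0.
have lim_den : (1 + (K%:R - 1) * expR (- u s)) @[s --> F] --> (1 : R).
  by have := cvgD (cvg_cst (1 : R)) (cvgMl_tmp (a := K%:R - 1) e0); rewrite mulr0 addr0; exact.
by have := cvgV (oner_neq0 R) lim_den; rewrite invr1; exact.
Qed.

Lemma cvg_peak_weight0 :
  expR (u s) @[s --> F] --> (0 : R) -> peak_weight (u s) @[s --> F] --> (0 : R).
Proof.
move=> e0; have lim_den : (expR (u s) + (K%:R - 1)) @[s --> F] --> (K%:R - 1 : R).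
  by have := cvgD e0 (cvg_cst (K%:R - 1 : R)); rewrite add0r; exact.
by have := cvgM e0 (cvgV (lt0r_neq0 Km1_gt0) lim_den); rewrite mul0r; exact.
Qed.

End peak_weight_limits.

Lemma cvg_softmax_spike (F : set_system R) {FF : Filter F} k l w :
  peak_weight t @[t --> F] --> w ->
  softmax K (spike k t) l @[t --> F] -->
    (if l == k then w else (1 - w) / (K%:R - 1)).
Proof.
move=> pw; under eq_fun do rewrite softmax_spike; case: eqP => // _.
by apply: cvgMr_tmp; apply: cvgB => //; exact: cvg_cst.
Qed.

Lemma argmin_DSKL_softmax a : 0 <= a < 1 \/ 1 < a <= K%:R / (K%:R - 1) ->
  argmin_pinfty K (fun g => DSKL K a (e1 R K) (softmax K g)).
Proof.
move=> /smoothing_range[a1 a_itv]; exists 0%E; split.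
  apply: cvg_sum_xlogxy => k; apply: cvg_smooth; rewrite e1_spike.
  under eq_fun do rewrite ray_spike.
  have -> : spike ord0K 1 k = if k == ord0K then 1 else (1 - 1) / (K%:R - 1).
    by rewrite /spike subrr mul0r.
  by apply: cvg_softmax_spike; apply: cvg_peak_weight1; exact: cvgr_expR.
move=> g _; have [e0 es] := sinv_simplex_simplex a_itv simplex_e1.
have [s0 ss] := sinv_simplex_simplex a_itv (simplex_softmax g).
apply: (sum_xlogxy_gt0 e0 s0 _ (i0 := ord0K)); first by rewrite es ss.
by rewrite (can_eq (smooth_invK _ a1)) e1_spike /spike eqxx gt_eqF ?softmax_lt1.
Qed.

Lemma qRL0 g : qRL K 0 g = softmax K g.
Proof. by apply/funext => k; rewrite /qRL /smooth_inv mul0r !subr0 divr1. Qed.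

Lemma argmin_DSKL_qRL0 : argmin_pinfty K (fun g => DSKL K 0 (e1 R K) (qRL K 0 g)).
Proof.
under eq_fun do rewrite qRL0.
by apply: argmin_DSKL_softmax; left; rewrite lexx ltr01.
Qed.

(* [smooth K a (e1 R K)] is the softmax of the ray point, so the minimum is [0]. *)
Lemma argmin_DSKL_qRL a : 0 < a < 1 \/ 1 < a < K%:R / (K%:R - 1) ->
  argmin_at K (fun g => DSKL K a (e1 R K) (qRL K a g)) (ray K (ln (K%:R / a + 1 - K%:R))).
Proof.
move=> a_cases; have [a1 a_itv] : a != 1 /\ 0 <= a <= K%:R / (K%:R - 1).
  by apply: smoothing_range; case: a_cases => /andP[? ?]; [left|right]; apply/andP; split; lra.
have [a0 aK] : 0 < a /\ a * (K%:R - 1) < K%:R.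
  have K1 : 1 < K%:R / (K%:R - 1) :> R by rewrite ltr_pdivlMr // mul1r gtrBl.
  by rewrite -ltr_pdivlMr //; case: a_cases => /andP[? ?]; split; lra.
set c := K%:R / a + 1 - K%:R.
have c0 : 0 < c.
  have : K%:R - 1 < K%:R / a by rewrite ltr_pdivlMr // mulrC.
  by rewrite /c; lra.
have softmax_ray_c : softmax K (ray K (ln c)) = fun k => smooth K a (e1 R K k).
  apply/funext => k; rewrite ray_spike e1_spike softmax_spike peak_weight_ln // /spike.
  by case: eqP => _; rewrite /c /smooth; field; rewrite K_neq0 !gt_eqF.
have Km1_lt : (K.-1 < K)%N by rewrite ltn_predL ltnW.
have ray_last0 : last0 K (ray K (ln c)).
  have Km1_neq0 : K.-1 != 0%N by rewrite -lt0n ltn_predRL.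
  by move=> k k_last; rewrite /ray k_last (negPf Km1_neq0).
split => // g g_last0; rewrite !DSKL_qRL // softmax_ray_c.
have [e0 es] := sinv_simplex_simplex a_itv simplex_e1.
have -> : (\sum_k xlogxy (smooth K a (e1 R K k)) (smooth K a (e1 R K k)))%E = 0%E.
  by apply: big1 => k _; exact: xlogxyxx.
have s0 k : 0 <= softmax K g k by exact: ltW (softmax_gt0 g k).
split; first by apply: sum_xlogxy_ge0; rewrite ?es ?sum_softmax.
move/sum_xlogxy_eq0 => /(_ e0 s0) eq_g; apply: (softmax_inj (l := Ordinal Km1_lt)).
  by rewrite g_last0 ?ray_last0.
by rewrite softmax_ray_c eq_g // es sum_softmax.
Qed.

Lemma smooth_max v : smooth K (K%:R / (K%:R - 1)) v = (1 - v) / (K%:R - 1).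
Proof. by rewrite /smooth; field; rewrite K_neq0 gt_eqF. Qed.

Lemma argmin_DSKL_qRL_max : argmin_ninfty K
  (fun g => DSKL K (K%:R / (K%:R - 1)) (e1 R K) (qRL K (K%:R / (K%:R - 1)) g)).
Proof.
set a := K%:R / (K%:R - 1).
have a1 : a != 1.
  apply/eqP => a_eq1; have := divfK (lt0r_neq0 Km1_gt0) K%:R.
  by rewrite -/a a_eq1 mul1r; lra.
have target k : smooth K a (e1 R K k) = if k == ord0K then 0 else (1 - 0) / (K%:R - 1).
  by rewrite smooth_max e1_spike /spike; case: eqP; rewrite ?subrr ?mul0r.
exists 0%E; split.
  under eq_fun do rewrite DSKL_qRL //.
  apply: cvg_sum_xlogxy => k; rewrite target.
  under eq_fun do rewrite ray_spike.
  apply: cvg_softmax_spike; apply: cvg_peak_weight0.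
  by apply/cvgNy_compNP; exact: cvgr_expR.
move=> g _; rewrite DSKL_qRL //.
have a_itv : 0 <= a <= a by rewrite lexx divr_ge0 // ltW // (lt_trans ltr01).
have [e0 es] := sinv_simplex_simplex a_itv simplex_e1.
have s0 k : 0 <= softmax K g k by exact: ltW (softmax_gt0 g k).
apply: (sum_xlogxy_gt0 e0 s0 _ (i0 := ord0K)); first by rewrite es sum_softmax.
by rewrite target eqxx lt_eqF ?softmax_gt0.
Qed.

Lemma smooth_dual a v :
  smooth K (K%:R - (K%:R - 1) * a) ((1 - v) / (K%:R - 1)) = smooth K a v.
Proof. by rewrite /smooth; field; rewrite K_neq0 gt_eqF. Qed.

Lemma dual_itv a : 1 < a <= K%:R / (K%:R - 1) -> 0 <= K%:R - (K%:R - 1) * a < 1.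
Proof.
move=> /andP[a1 aK]; rewrite subr_ge0 mulrC -ler_pdivlMr // aK /=.
by rewrite ltrBlDr -ltrBlDl -[X in X < _]mul1r ltr_pM2r.
Qed.

Lemma sinv_simplex_dual a p : sinv_simplex K a p ->
  sinv_simplex K (K%:R - (K%:R - 1) * a) (fun k => (1 - p k) / (K%:R - 1)).
Proof. by move=> hp; rewrite /sinv_simplex; under eq_fun do rewrite smooth_dual. Qed.

Lemma DSKL_dual a p q : DSKL K a p q =
  DSKL K (K%:R - (K%:R - 1) * a) (fun k => (1 - p k) / (K%:R - 1))
                                 (fun k => (1 - q k) / (K%:R - 1)).
Proof. by apply: eq_bigr => k _; rewrite !smooth_dual. Qed.

Lemma DSKL_qRL_dual a p g : let b := K%:R - (K%:R - 1) * a in a != 1 -> b != 1 ->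
  DSKL K a p (qRL K a g) = DSKL K b (fun k => (1 - p k) / (K%:R - 1)) (qRL K b g).
Proof. by move=> b a1 b1; rewrite !DSKL_qRL //; apply: eq_bigr => k _; rewrite smooth_dual. Qed.

Lemma DSKL_duality a p q g : 1 < a <= K%:R / (K%:R - 1) -> sinv_simplex K a p ->
  let b := K%:R - (K%:R - 1) * a in
  let p' := fun k => (1 - p k) / (K%:R - 1) in
  let q' := fun k => (1 - q k) / (K%:R - 1) in
  DSKL K a p q = DSKL K b p' q' /\
  DSKL K a p (qRL K a g) = DSKL K b p' (qRL K b g) /\
  0 <= b < 1 /\ sinv_simplex K b p'.
Proof.
move=> a_itv hp b p' q'; have b_itv := dual_itv a_itv.
have [a1 b1] : a != 1 /\ b != 1.
  by case/andP: a_itv => a1 _; case/andP: b_itv => _ b1; rewrite gt_eqF ?lt_eqF.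
split; first exact: DSKL_dual.
split; first exact: DSKL_qRL_dual.
by split; last exact: sinv_simplex_dual.
Qed.

End two_le_K.

Section two_classes.
Variable R : realType.
Implicit Types (a v : R) (p g : 'I_2 -> R).

Lemma sum_ord2 (f : 'I_2 -> R) k : \sum_j f j = f k + f (rev_ord k).
Proof.
rewrite big_ord_recl big_ord1.
by case: k => -[|[|//]] k_lt; [|rewrite addrC]; congr (f _ + f _); apply: val_inj.
Qed.

Lemma subr_ord2 p k : \sum_j p j = 1 -> 1 - p k = p (rev_ord k).
Proof. by move=> <-; rewrite (sum_ord2 _ k) addrC addKr. Qed.

Lemma smooth2_compl a v : smooth 2 (2 - a) (1 - v) = smooth 2 a v.
Proof. by rewrite /smooth; field. Qed.

Lemma softmax2N g k : softmax 2 (fun j => - g j) k = softmax 2 g (rev_ord k).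
Proof.
rewrite /softmax (sum_ord2 _ k) (sum_ord2 (fun l => expR (g l)) k) !expRN.
have eg := expR_gt0 (g k); have eg' := expR_gt0 (g (rev_ord k)).
by field; rewrite !gt_eqF ?addr_gt0.
Qed.

Lemma DSKL_ord2_symmetry a p g : 1 < a <= 2 -> sinv_simplex 2 a p ->
  let p' := fun k => 1 - p k in
  let mg := fun k => - g k in
  DSKL 2 a p (softmax 2 g) = DSKL 2 (2 - a) p' (softmax 2 mg) /\
  DSKL 2 (2 - a) p' (softmax 2 mg) = DSKL 2 (2 - a) p (softmax 2 g) /\
  DSKL 2 a p (qRL 2 a g) = DSKL 2 (2 - a) p' (qRL 2 (2 - a) g) /\
  DSKL 2 (2 - a) p' (qRL 2 (2 - a) g) = DSKL 2 (2 - a) p (qRL 2 (2 - a) mg) /\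
  0 <= 2 - a < 1 /\ sinv_simplex 2 (2 - a) p'.
Proof.
move=> /andP[a1 a2] hp p' mg.
have [an1 bn1] : a != 1 /\ 2 - a != 1 by split; apply/eqP => h; lra.
have p'_rev : p' = p \o @rev_ord 2.
  by apply/funext => k; apply: subr_ord2; exact: sum_smooth_eq1 an1 hp.2.
have softmax_mg : softmax 2 mg = softmax 2 g \o @rev_ord 2.
  by apply/funext => k; exact: softmax2N.
have softmax_mg_compl k : softmax 2 mg k = 1 - softmax 2 g k.
  by rewrite softmax_mg /= subr_ord2 // sum_softmax.
split; first by apply: eq_bigr => k _; rewrite softmax_mg_compl !smooth2_compl.
split; first by rewrite p'_rev softmax_mg DSKL_perm //; exact: rev_ord_inj.
split; first by rewrite !DSKL_qRL //; apply: eq_bigr => k _; rewrite smooth2_compl.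
split.
  rewrite !DSKL_qRL // p'_rev softmax_mg [RHS](reindex_inj rev_ord_inj) /=.
  by apply: eq_bigr => k _; rewrite rev_ordK.
split; first by apply/andP; split; lra.
by rewrite /sinv_simplex; under eq_fun do rewrite smooth2_compl.
Qed.

End two_classes.

Theorem theorem1 (R : realType) (K : nat) (hK : (2 <= K)%N) :
  (* (B1) *)
  (forall a : R,
     let lo := - a / (K%:R * (1 - a)) in
     let hi := (K%:R - a) / (K%:R * (1 - a)) in
     (0 <= a < 1 ->
        (forall (g : 'I_K -> R) (k : 'I_K), lo <= qRL K a g k <= hi) /\
        (forall (k : 'I_K) (y : R), lo < y < hi -> exists g, qRL K a g k = y) /\
        lo <= 0 /\ 1 <= hi) /\
     (1 < a <= K%:R / (K%:R - 1) ->
        (forall (g : 'I_K -> R) (k : 'I_K), hi <= qRL K a g k <= lo) /\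
        (forall (k : 'I_K) (y : R), hi < y < lo -> exists g, qRL K a g k = y) /\
        hi <= 0 /\ 1 <= lo)) /\
  (* (B2) *)
  (forall (a : R) (g : 'I_K -> R), a != 1 -> \sum_(k < K) qRL K a g k = 1) /\
  (* (B3) *)
  (forall (a : R) (p q : 'I_K -> R),
     (0 <= a < 1 \/ 1 < a <= K%:R / (K%:R - 1)) ->
     sinv_simplex K a p -> sinv_simplex K a q ->
     (0 <= DSKL K a p q)%E /\ (DSKL K a p q = 0%E <-> p = q)) /\
  (forall (p q : 'I_K -> R),
     sinv_simplex K 1 p -> sinv_simplex K 1 q -> DSKL K 1 p q = 0%E) /\
  (* (B4) *)
  (forall (a r : R) (p1 p2 q1 q2 : 'I_K -> R),
     0 <= a <= K%:R / (K%:R - 1) -> 0 <= r <= 1 ->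
     sinv_simplex K a p1 -> sinv_simplex K a p2 ->
     sinv_simplex K a q1 -> sinv_simplex K a q2 ->
     (DSKL K a (fun k => (r * p1 k + (1 - r) * p2 k)%R)
               (fun k => (r * q1 k + (1 - r) * q2 k)%R)
      <= r%:E * DSKL K a p1 q1 + (1 - r)%R%:E * DSKL K a p2 q2)%E) /\
  (* (B5) *)
  (forall a : R,
     (0 <= a < 1 \/ 1 < a <= K%:R / (K%:R - 1)) ->
     argmin_pinfty K (fun g => DSKL K a (e1 R K) (softmax K g))) /\
  (* (B6) *)
  (argmin_pinfty K (fun g => DSKL K 0 (e1 R K) (qRL K 0 g))) /\
  (forall a : R,
     (0 < a < 1 \/ 1 < a < K%:R / (K%:R - 1)) ->
     argmin_at K (fun g => DSKL K a (e1 R K) (qRL K a g))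
               (ray K (ln (K%:R / a + 1 - K%:R)))) /\
  (argmin_ninfty K (fun g => DSKL K (K%:R / (K%:R - 1)) (e1 R K)
                                  (qRL K (K%:R / (K%:R - 1)) g))) /\
  (* (B7) *)
  (forall (a : R) (p q g : 'I_K -> R),
     1 < a <= K%:R / (K%:R - 1) ->
     sinv_simplex K a p -> sinv_simplex K a q ->
     let b := K%:R - (K%:R - 1) * a in
     let p' := fun k => (1 - p k) / (K%:R - 1) in
     let q' := fun k => (1 - q k) / (K%:R - 1) in
     DSKL K a p q = DSKL K b p' q' /\
     DSKL K a p (qRL K a g) = DSKL K b p' (qRL K b g) /\
     0 <= b < 1 /\
     sinv_simplex K b p') /\
  (* (B8) *)
  (K = 2%N ->
   forall (a : R) (p g : 'I_K -> R),
     1 < a <= 2 -> sinv_simplex K a p ->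
     let p' := fun k => 1 - p k in
     let mg := fun k => - g k in
     DSKL K a p (softmax K g) = DSKL K (2 - a) p' (softmax K mg) /\
     DSKL K (2 - a) p' (softmax K mg) = DSKL K (2 - a) p (softmax K g) /\
     DSKL K a p (qRL K a g) = DSKL K (2 - a) p' (qRL K (2 - a) g) /\
     DSKL K (2 - a) p' (qRL K (2 - a) g) = DSKL K (2 - a) p (qRL K (2 - a) mg) /\
     0 <= 2 - a < 1 /\
     sinv_simplex K (2 - a) p').
Proof.
split; first exact: qRL_range.
split; first exact: sum_qRL.
split.
  move=> a p q /(smoothing_range hK)[a1 _] hp hq.
  by split; [exact: DSKL_ge0 | exact: DSKL_eq0].
split; first by move=> p q _ _; exact: DSKL1.
split; first by move=> a r p1 p2 q1 q2 _; exact: DSKL_convex.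
split; first exact: argmin_DSKL_softmax.
split; first exact: argmin_DSKL_qRL0.
split; first exact: argmin_DSKL_qRL.
split; first exact: argmin_DSKL_qRL_max.
split; first by move=> a p q g a_itv hp _; exact: DSKL_duality.
by move=> K2; subst K; exact: DSKL_ord2_symmetry.
Qed.
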